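(* Let $\mathcal{G}$ be a cyclic group of prime order with generator $g$, and let $m$ be a positive integer. Let $\mathcal{A}_{m\text{-}\mathsf{MDL}}$ be a (possibly randomized) $m$-MDL algorithm in the GGM having at most $T$ group operation gates. Then \[\Pr_{\mathcal{A}_{m\text{-}\mathsf{MDL}},\mathbf{x}}\left[\mathcal{A}_{m\text{-}\mathsf{MDL}}^{\mathcal{G}}(g,g^{\mathbf{x}})\rightarrow\mathbf{x}\right]=O\!\left(\left(\frac{e(T+2m+1)^2}{2m|\mathcal{G}|}\right)^m\right),\] where $\mathbf{x}=(x_1,\dots,x_m)$ is uniformly random in $\{0,\dots,|\mathcal{G}|-1\}^m$ and $g^{\mathbf{x}}=(g^{x_1},\dots,g^{x_m})$.
   Context: Generic group model (Maurer-style). Let $\mathcal{G}$ be a cyclic group of known prime order $N$ with generator $g$. A GGM algorithm is a circuit with bit wires (values in $\{0,1\}$) and element wires (values in $\mathbb{Z}_N\cup\{\bot\}$; an element wire holding $x$ is written $g^x$). Bit gates act only on bit wires. Element gates: a labeling gate maps $\lceil\log_2N\rceil$ bit wires representing $x\in\mathbb{Z}_N$ to $g^x$ (or $\bot$ if no such $x$); a group operation gate maps element wires $g^x,g^y$ and a bit $b$ to $g^{x+by}$ (or $\bot$ if an input is $\bot$); an equality gate outputs the bit $1$ iff its two element inputs contain the same element different from $\bot$. The cost measure (group operation complexity) counts labeling and group operation gates; all other gates are free. No two equality gates have the same input wires. The $m$-multiple DL ($m$-MDL) problem asks, given $(g,g^{x_1},\dots,g^{x_m})$ on element wires for uniformly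 random $(x_1,\dots,x_m)\in\{0,\dots,N-1\}^m$, to output $(x_1,\dots,x_m)$. *)

From mathcomp Require Import all_boot all_order all_algebra.
From mathcomp Require Import reals sequences exp.
Set Implicit Arguments. Unset Strict Implicit. Unset Printing Implicit Defensive.
Import Order.TTheory GRing.Theory Num.Theory.

(* Maurer-style generic group model for a cyclic group of prime order N
   with generator g.  An element wire holding g^x is represented by
   [Some x] (x < N), the error symbol bot by [None]. *)

(* Gates.  Wires of each kind are numbered in creation order:
   bit wires 0 .. r-1 are the random coins of the algorithm, element wires
   0, 1, .., m hold g, g^{x_1}, .., g^{x_m}. *)
Inductive gate : Type :=
  | BitG of (seq bool -> bool)
  | LabelG of seq nat            (* labeling gate: indices of the
                                    ceil(log2 N) bit wires (little endian) *)
  | OpG of nat & nat & nat       (* group operation: element wires i, j,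
                                    bit wire k : g^x, g^y, b |-> g^(x+by) *)
  | EqG of nat & nat.

Record algo : Type := Algo {
  rbits : nat;
  gates : seq gate;
  output : seq bool -> seq nat }.

Definition nbits (N : nat) : nat := up_log 2 N.

Definition bits_value (bs : seq bool) (s : seq nat) : nat :=
  \sum_(i < size s) (nth false bs (nth 0 s i) : nat) * 2 ^ i.

Definition step (N : nat) (st : seq bool * seq (option nat)) (g : gate)
  : seq bool * seq (option nat) :=
  let: (bs, es) := st in
  match g with
  | BitG f => (rcons bs (f bs), es)
  | LabelG s =>
      let v := bits_value bs s in
      (bs, rcons es (if v < N then Some v else None))
  | OpG i j k =>
      (bs, rcons es (match nth None es i, nth None es j with
                     | Some a, Some b => Some ((a + nth false bs k * b) %% N)
                     | _, _ => None end))
  | EqG i j =>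
      (rcons bs (match nth None es i, nth None es j with
                 | Some a, Some b => a == b
                 | _, _ => false end), es)
  end.

Definition run (N m : nat) (A : algo) (coins : {ffun 'I_(rbits A) -> bool})
  (x : {ffun 'I_m -> 'I_N}) : seq bool :=
  (foldl (step N)
     ([seq coins i | i <- enum 'I_(rbits A)],
      Some 1 :: [seq Some (val (x i)) | i <- enum 'I_m])
     (gates A)).1.

(* Well-formedness: gates only read existing wires, labeling gates read
   exactly ceil(log2 N) bit wires. nb / ne = current numbers of wires. *)
Fixpoint wf_gates (N nb ne : nat) (gs : seq gate) : bool :=
  match gs with
  | [::] => true
  | g :: gs' =>
      match g with
      | BitG _ => wf_gates N nb.+1 ne gs'
      | LabelG s => (size s == nbits N) && all (fun i => i < nb) s
                    && wf_gates N nb ne.+1 gs'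
      | OpG i j k => [&& i < ne, j < ne, k < nb & wf_gates N nb ne.+1 gs']
      | EqG i j => [&& i < ne, j < ne & wf_gates N nb.+1 ne gs']
      end
  end.

Definition wf_algo (N m : nat) (A : algo) : bool :=
  wf_gates N (rbits A) m.+1 (gates A).

Fixpoint eq_inputs (gs : seq gate) : seq (nat * nat) :=
  match gs with
  | [::] => [::]
  | EqG i j :: gs' => (minn i j, maxn i j) :: eq_inputs gs'
  | _ :: gs' => eq_inputs gs'
  end.

Definition eq_distinct (A : algo) : bool := uniq (eq_inputs (gates A)).

Definition is_costly (g : gate) : bool :=
  match g with LabelG _ | OpG _ _ _ => true | _ => false end.

Definition group_cost (A : algo) : nat := count is_costly (gates A).

Definition succeeds (N m : nat) (A : algo) (coins : {ffun 'I_(rbits A) -> bool}) (x : {ffun 'I_m -> 'I_N}) :=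
  output A (@run N m A coins x) == [seq val (x i) | i <- enum 'I_m].

Definition success_prob (R : realType) (N m : nat) (A : algo) : R :=
  (#|[set p : {ffun 'I_(rbits A) -> bool} * {ffun 'I_m -> 'I_N}
       | @succeeds N m A p.1 p.2]|)%:R / (2 ^ rbits A * N ^ m)%:R.

From mathcomp Require Import all_boot all_order all_algebra.
From mathcomp Require Import reals sequences exp.
From mathcomp Require Import zify ring.
Import Order.TTheory GRing.Theory Num.Theory.
Set Implicit Arguments. Unset Strict Implicit. Unset Printing Implicit Defensive.

(* Fix the random coins and regard x as a point of F_N^m. Every element wire
   then holds either bot for all x, or g^(phi x) for an affine function phi of
   x, so the algorithm learns about x only through equality gates, each asking
   whether an affine function vanishes at x. Count the successful x inside an
   affine subspace of size at most N^d by induction along the circuit. Once all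
   answers are fixed the output no longer depends on x, so at most one x
   succeeds. A query that is constant on the subspace leaves it unchanged;
   otherwise the answer "no" keeps the subspace and the answer "yes" cuts it
   down to a hyperplane section of size at most N^(d-1). By Pascal's rule, q
   queries allow at most sum_(k <= d) C(q, k) successful points, which for
   d = m is at most (e Q / m)^m whenever q, m <= Q. The equality gates have
   pairwise distinct input pairs among at most T + m + 1 element wires, so
   2 q <= (T + 2 m + 1)^2, and the bound holds with constant 1. *)

Definition binom_sum (q d : nat) : nat := \sum_(k < d.+1) 'C(q, k).

Lemma binom_sum0n d : binom_sum 0 d = 1.
Proof. by rewrite /binom_sum big_ord_recl bin0 big1 // => k _; rewrite bin0n. Qed.

Lemma binom_sumS q d : binom_sum q.+1 d.+1 = binom_sum q d.+1 + binom_sum q d.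
Proof.
rewrite /binom_sum big_ord_recl bin0 [in RHS]big_ord_recl bin0 -addnA; congr (_ + _).
by rewrite -big_split; apply: eq_bigr => k _; rewrite binS.
Qed.

Lemma leq_binom_sum2l q q' d : q <= q' -> binom_sum q d <= binom_sum q' d.
Proof. by move=> le_qq'; apply: leq_sum => k _; apply: leq_bin2l. Qed.

Section BinomSumEstimate.
Local Open Scope ring_scope.

Lemma binom_sum_le_expR (R : realType) q d (Q : R) :
  (0 < d)%N -> q%:R <= Q -> d%:R <= Q ->
  (binom_sum q d)%:R <= (expR 1 * Q / d%:R) ^+ d.
Proof.
move=> d_gt0 qQ dQ.
have d_pos : 0 < d%:R :> R by rewrite ltr0n.
have Q_pos : 0 < Q by apply: lt_le_trans dQ.
pose r := d%:R / Q.
have r_gt0 : 0 < r by rewrite divr_gt0.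
have r_le1 : r <= 1 by rewrite ler_pdivrMr // mul1r.
(* With r = d / Q: r^d B(q, d) <= (1 + r)^q <= e^(r q) <= e^d. *)
pose n := (q + d).+1.
have weighted : r ^+ d * (binom_sum q d)%:R <= (1 + r) ^+ q.
  rewrite addrC exprD1n /binom_sum natr_sum mulr_sumr.
  rewrite (big_ord_widen n (fun k => r ^+ d * 'C(q, k)%:R)) ?ltnS ?leq_addl //.
  rewrite (big_ord_widen n (fun k => r ^+ k *+ 'C(q, k))) ?ltnS ?leq_addr //.
  rewrite big_mkcond [X in _ <= X]big_mkcond /=; apply: ler_sum => k _.
  case: ifP => [le_kd|_]; last by case: ifP => // _; rewrite mulrn_wge0 // exprn_ge0 // ltW.
  case: ifP => [_|/negbT]; last by rewrite -leqNgt => lt_qk; rewrite bin_small // mulr0.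
  by rewrite mulr_natr ler_wMn2r // ler_wiXn2l // ltW.
have binomial_exp : (1 + r) ^+ q <= expR 1 ^+ d.
  apply: (@le_trans _ _ (expR r ^+ q)).
    by rewrite lerXn2r ?nnegrE ?expR_ge0 ?expR_ge1Dx // addr_ge0 // ltW.
  rewrite -!expRM_natl mulr1 ler_expR.
  by rewrite /r mulrA ler_pdivrMr // mulrC ler_pM2l.
have := le_trans weighted binomial_exp.
rewrite mulrC -ler_pdivlMr ?exprn_gt0 // => /le_trans; apply.
by rewrite -expr_div_n /r invf_div mulrA.
Qed.
End BinomSumEstimate.

Section AffineSubspaces.
Local Open Scope ring_scope.
Variables (F : finFieldType) (V : finLmodType F).

Definition affine_closed (S : {set V}) :=
  forall y x1 x2 t, y \in S -> x1 \in S -> x2 \in S -> y + t *: (x2 - x1) \in S.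

Definition affine_fun (phi : V -> F) :=
  forall y x1 x2 t, phi (y + t *: (x2 - x1)) = phi y + t * (phi x2 - phi x1).

Definition zero_section (S : {set V}) (phi : V -> F) := [set x in S | phi x == 0].

Lemma affine_closedT : affine_closed [set: V].
Proof. by move=> *; rewrite inE. Qed.

Lemma affine_closed_section S phi :
  affine_closed S -> affine_fun phi -> affine_closed (zero_section S phi).
Proof.
move=> clS aff y x1 x2 t; rewrite !inE /= => /andP[yS /eqP phi_y] /andP[x1S /eqP phi_x1].
move=> /andP[x2S /eqP phi_x2].
by rewrite clS //= aff phi_y phi_x1 phi_x2 subrr mulr0 addr0.
Qed.

Lemma affine_fun_cst c : affine_fun (fun=> c).
Proof. by move=> *; rewrite subrr mulr0 addr0. Qed.

Lemma affine_funDM phi psi c :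
  affine_fun phi -> affine_fun psi -> affine_fun (fun x => phi x + c * psi x).
Proof. by move=> aff_phi aff_psi y x1 x2 t; rewrite aff_phi aff_psi; ring. Qed.

Lemma affine_funB phi psi :
  affine_fun phi -> affine_fun psi -> affine_fun (fun x => phi x - psi x).
Proof. by move=> aff_phi aff_psi y x1 x2 t; rewrite aff_phi aff_psi; ring. Qed.

(* The line through a point of the section in the direction x2 - x1 meets the
   section only once, so these lines inject (section) * F into S. *)
Lemma card_affine_section S phi x1 x2 :
  affine_closed S -> affine_fun phi -> x1 \in S -> x2 \in S ->
  phi x1 = 0 -> phi x2 != 0 -> (#|F| * #|zero_section S phi| <= #|S|)%N.
Proof.
move=> clS aff x1S x2S phi_x1 phi_x2.
pose line (p : V * F) := p.1 + p.2 *: (x2 - x1).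
have phi_line y t : phi y = 0 -> phi (line (y, t)) = t * phi x2.
  by move=> phi_y; rewrite /line aff phi_y phi_x1 subr0 add0r.
rewrite mulnC -cardsT -cardsX -(card_in_imset (f := line)).
  apply/subset_leq_card/subsetP => _ /imsetP[[y t] /setXP[+ _] ->].
  by rewrite inE => /andP[yS _]; apply: clS.
move=> [y t] [y' t'] /setXP[+ _] /setXP[+ _]; rewrite !inE.
move=> /andP[_ /eqP phi_y] /andP[_ /eqP phi_y'] eq_line.
have eq_t : t = t'.
  by apply: (mulIf phi_x2); rewrite -(phi_line y) // -(phi_line y') // eq_line.
by move: eq_line; rewrite /line /= eq_t => /addIr ->.
Qed.

Lemma card_affine_query S phi (P : bool -> pred V) q d :
  affine_closed S -> affine_fun phi -> (#|S| <= #|F| ^ d)%N ->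
  (forall S' d' b, affine_closed S' -> (#|S'| <= #|F| ^ d')%N ->
     (#|[set x in S' | P b x]| <= binom_sum q d')%N) ->
  (#|[set x in S | P (phi x == 0%R) x]| <= binom_sum q.+1 d)%N.
Proof.
move=> clS aff cardS IH.
case: (boolP [exists x1 in S, exists x2 in S, (phi x1 == 0) && (phi x2 != 0)]).
  case/exists_inP=> x1 x1S /exists_inP[x2 x2S /andP[/eqP phi_x1 phi_x2]].
  have card_sec := card_affine_section clS aff x1S x2S phi_x1 phi_x2.
  case: d cardS => [|d] cardS.
    move/card_le1_eqP: cardS => /(_ x2 x1 x2S x1S) eq_x12.
    by rewrite -eq_x12 phi_x1 eqxx in phi_x2.
  have card_sec_le : (#|zero_section S phi| <= #|F| ^ d)%N.
    have F_gt0 : (0 < #|F|)%N := ltnW (card_finNzRing_gt1 F).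
    by rewrite -(leq_pmul2l F_gt0) -expnS (leq_trans card_sec).
  have split_answer : [set x in S | P (phi x == 0) x] \subset
      [set x in zero_section S phi | P true x] :|: [set x in S | P false x].
    apply/subsetP => x; rewrite !inE /=.
    by case: (phi x == 0) => /andP[-> ->]; rewrite ?orbT.
  rewrite binom_sumS addnC; apply: leq_trans (subset_leq_card split_answer) _.
  apply: leq_trans (leq_card_setU _ _) (leq_add _ _); apply: IH => //.
  exact: affine_closed_section.
rewrite negb_exists_in => /forall_inP not_mixed.
have [b const_answer] : exists b, {in S, forall x, (phi x == 0) = b}.
  case: (boolP [exists x0 in S, phi x0 == 0]) => [/exists_inP[x0 x0S phi_x0]|].
    exists true => x xS; apply: contraNT (not_mixed x0 x0S) => phi_x.
    by apply/exists_inP; exists x; rewrite // phi_x0.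
  by rewrite negb_exists_in => /forall_inP zero_free; exists false => x /zero_free /negbTE.
apply: leq_trans (leq_binom_sum2l d (leqnSn q)).
apply: leq_trans (IH S d b clS cardS); apply/subset_leq_card/subsetP => x.
by rewrite !inE => /andP[xS]; rewrite const_answer // xS.
Qed.

End AffineSubspaces.

Lemma foldl_step_cons N st g gs :
  foldl (step N) st (g :: gs) = foldl (step N) (step N st g) gs.
Proof. by []. Qed.

Section SymbolicExecution.
Local Open Scope ring_scope.
Variables (N m : nat) (N_prime : prime N).
Local Notation F := 'F_N.
Local Notation V := 'rV[F]_m.

(* A symbolic element wire is [Some phi], standing for g^(phi x), or [None]
   for bot. *)
Definition wire_values (x : V) (ws : seq (option (V -> F))) : seq (option nat) :=
  map (omap (fun phi => nat_of_ord (phi x))) ws.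

Definition affine_wire (w : option (V -> F)) :=
  if w is Some phi then affine_fun phi else True.

Definition affine_wires (ws : seq (option (V -> F))) :=
  forall i, affine_wire (nth None ws i).

Definition label_wire (bs : seq bool) (s : seq nat) : option (V -> F) :=
  if (bits_value bs s < N)%N then Some (fun=> (bits_value bs s)%:R) else None.

Definition op_wire bs (ws : seq (option (V -> F))) i j k : option (V -> F) :=
  match nth None ws i, nth None ws j with
  | Some phi, Some psi => Some (fun x => phi x + (nth false bs k)%:R * psi x)
  | _, _ => None
  end.

Definition eq_query (ws : seq (option (V -> F))) i j : option (V -> F) :=
  match nth None ws i, nth None ws j with
  | Some phi, Some psi => Some (fun x => phi x - psi x)
  | _, _ => None
  end.

Lemma nth_wire_values x ws i :
  nth None (wire_values x ws) i = omap (fun phi => nat_of_ord (phi x)) (nth None ws i).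
Proof. by elim: ws i => [|w ws IH] [|i] //=. Qed.

Lemma val_Fp_small v : (v < N)%N -> nat_of_ord (v%:R : F) = v.
Proof. by move=> lt_vN; rewrite val_Fp_nat // modn_small. Qed.

Lemma val_Fp_addMn (a b : F) k :
  nat_of_ord (a + k%:R * b) = ((a + k * b) %% N)%N.
Proof. by rewrite -val_Fp_nat // natrD natrM !natr_Zp. Qed.

Lemma step_LabelG bs ws s x :
  step N (bs, wire_values x ws) (LabelG s) =
  (bs, wire_values x (rcons ws (label_wire bs s))).
Proof.
by rewrite /= /wire_values map_rcons /label_wire; case: ifP => //= /val_Fp_small ->.
Qed.

Lemma step_OpG bs ws i j k x :
  step N (bs, wire_values x ws) (OpG i j k) =
  (bs, wire_values x (rcons ws (op_wire bs ws i j k))).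
Proof.
rewrite /= !nth_wire_values /wire_values map_rcons /op_wire.
case: (nth None ws i) => [phi|] //; case: (nth None ws j) => [psi|] //.
by rewrite /omap /obind /oapp -val_Fp_addMn.
Qed.

Lemma step_EqG bs ws i j x :
  step N (bs, wire_values x ws) (EqG i j) =
  (rcons bs (if eq_query ws i j is Some phi then phi x == 0 else false), wire_values x ws).
Proof.
rewrite /= !nth_wire_values /eq_query.
by case: (nth None ws i) => [phi|] //; case: (nth None ws j) => [psi|] //=; rewrite subr_eq0.
Qed.

Lemma affine_wires_rcons ws w :
  affine_wires ws -> affine_wire w -> affine_wires (rcons ws w).
Proof. by move=> aff_ws aff_w i; rewrite nth_rcons; case: ifP => _ //; case: eqP. Qed.

Lemma affine_label_wire bs s : affine_wire (label_wire bs s).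
Proof. by rewrite /label_wire; case: ifP => //= _; apply: affine_fun_cst. Qed.

Lemma affine_op_wire bs ws i j k : affine_wires ws -> affine_wire (op_wire bs ws i j k).
Proof.
move=> aff_ws; rewrite /op_wire; move: (aff_ws i) (aff_ws j).
by case: (nth None ws i) => [phi|] //; case: (nth None ws j) => [psi|] //=; apply: affine_funDM.
Qed.

Lemma affine_eq_query ws i j : affine_wires ws -> affine_wire (eq_query ws i j).
Proof.
move=> aff_ws; rewrite /eq_query; move: (aff_ws i) (aff_ws j).
by case: (nth None ws i) => [phi|] //; case: (nth None ws j) => [psi|] //=; apply: affine_funB.
Qed.

Lemma card_solved_le_binom_sum (out : seq bool -> seq nat) (target : V -> seq nat)
    gs S bs ws d :
  injective target -> affine_closed S -> (#|S| <= #|F| ^ d)%N -> affine_wires ws ->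
  (#|[set x in S | out (foldl (step N) (bs, wire_values x ws) gs).1 == target x]|
    <= binom_sum (size (eq_inputs gs)) d)%N.
Proof.
move=> target_inj; elim: gs S bs ws d => [|g gs IH] S bs ws d clS cardS aff_ws.
  rewrite binom_sum0n; apply/card_le1_eqP => x y.
  by rewrite !inE => /andP[_ /eqP->] /andP[_ /eqP/target_inj].
case: g => [f|s|i j k|i j]; under eq_finset => x do rewrite foldl_step_cons.
- exact: IH.
- under eq_finset => x do rewrite step_LabelG.
  by apply: IH => //; apply: affine_wires_rcons => //; apply: affine_label_wire.
- under eq_finset => x do rewrite step_OpG.
  by apply: IH => //; apply: affine_wires_rcons => //; apply: affine_op_wire.
under eq_finset => x do rewrite step_EqG.
have := affine_eq_query i j aff_ws; case: (eq_query ws i j) => [phi|] /= aff_phi.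
  apply: (card_affine_query
    (P := fun b x => out (foldl (step N) (rcons bs b, wire_values x ws) gs).1 == target x)) => //.
  by move=> S' d' b clS' cardS'; apply: IH.
by apply: leq_trans (leq_binom_sum2l d (leqnSn _)); apply: IH.
Qed.

Definition coords (v : V) : seq nat := [seq nat_of_ord (v 0 i) | i <- enum 'I_m].

Lemma coords_inj : injective coords.
Proof.
move=> v w /eq_in_map eq_vw; apply/rowP => i; apply: val_inj.
by apply: eq_vw; rewrite mem_enum.
Qed.

Definition init_wires : seq (option (V -> F)) :=
  Some (fun=> 1) :: [seq Some (fun v : V => v 0 i) | i <- enum 'I_m].

Lemma affine_init_wires : affine_wires init_wires.
Proof.
case=> [|i] /=; first exact: affine_fun_cst.
elim: (enum 'I_m) i => [|k s IH] [|i] //= y x1 x2 t.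
by rewrite !mxE.
Qed.

(* ['F_N] is ['I_N] only up to the cast [Fp_cast]. *)
Definition embed (x : {ffun 'I_m -> 'I_N}) : V :=
  \row_i cast_ord (esym (Fp_cast N_prime)) (x i).

Lemma embed_inj : injective embed.
Proof.
move=> x y eq_xy; apply/ffunP => i; apply: val_inj.
by have /(congr1 val) := congr1 (fun v : V => v 0 i) eq_xy; rewrite !mxE.
Qed.

Lemma coords_embed x : coords (embed x) = [seq val (x i) | i <- enum 'I_m].
Proof. by apply: eq_map => i; rewrite mxE. Qed.

Lemma wire_values_init x :
  wire_values (embed x) init_wires = Some 1%N :: [seq Some (val (x i)) | i <- enum 'I_m].
Proof.
rewrite /wire_values; congr (_ :: _).
by elim: (enum 'I_m) => //= i s ->; rewrite mxE.
Qed.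

Lemma card_succeeds_le (A : algo) coins :
  (#|[set x | @succeeds N m A coins x]| <= binom_sum (size (eq_inputs (gates A))) m)%N.
Proof.
have card_V : (#|[set: V]| <= #|F| ^ m)%N by rewrite cardsT card_mx mul1n.
apply: leq_trans (card_solved_le_binom_sum (output A) (gates A)
  [seq coins i | i <- enum 'I_(rbits A)] coords_inj (@affine_closedT _ V) card_V affine_init_wires).
rewrite -(card_in_imset (in2W embed_inj)); apply/subset_leq_card/subsetP => _ /imsetP[x + ->].
by rewrite !inE /succeeds /run wire_values_init coords_embed.
Qed.

End SymbolicExecution.

Lemma card_set_pair_le (A B : finType) (P : A -> B -> bool) k :
  (forall a, #|[set b | P a b]| <= k) -> #|[set p : A * B | P p.1 p.2]| <= #|A| * k.
Proof.
move=> card_fibre; rewrite -sum1_card -sum_nat_const.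
rewrite (eq_bigl (fun p : A * B => predT p.1 && P p.1 p.2)) => [|p]; last by rewrite inE.
rewrite -(pair_big_dep predT P (fun _ _ => 1)); apply: leq_sum => a _.
by rewrite sum1_card (leq_trans _ (card_fibre a)) // eq_leq //; apply: eq_card => b; rewrite inE.
Qed.

Lemma success_prob_le (R : realType) N m (A : algo) : prime N ->
  (success_prob R N m A <= (binom_sum (size (eq_inputs (gates A))) m)%:R / (N ^ m)%:R)%R.
Proof.
move=> N_prime; have Nm_gt0 : (0 < N ^ m)%N by rewrite expn_gt0 prime_gt0.
rewrite /success_prob natrM invfM mulrA ler_pM2r ?invr_gt0 ?ltr0n //.
rewrite ler_pdivrMr ?ltr0n ?expn_gt0 // -natrM ler_nat mulnC.
have := card_set_pair_le (card_succeeds_le m N_prime (A := A)).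
by rewrite card_ffun card_bool card_ord.
Qed.

Lemma eq_inputs_bounded N gs nb ne : wf_gates N nb ne gs ->
  all (fun p => p.1 <= p.2 < ne + count is_costly gs) (eq_inputs gs).
Proof.
elim: gs nb ne => [|g gs IH] nb ne //=.
case: g => [f|s|i j k|i j] /=.
- exact: IH.
- by case/andP=> _ /IH; apply: sub_all => p; rewrite addnS addSn.
- by case/and4P=> _ _ _ /IH; apply: sub_all => p; rewrite addnS addSn.
- by case/and3P=> lt_i lt_j /IH ->; rewrite andbT /=; lia.
Qed.

Definition ordered_pairs W := [seq (a, b) | b <- iota 0 W, a <- iota 0 b.+1].

Lemma mem_ordered_pairs W a b : ((a, b) \in ordered_pairs W) = (a <= b < W).
Proof.
apply/allpairsPdep/idP => [[b' [a' [+ + [-> ->]]]]|le_ab_W].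
  by rewrite !mem_iota /=; lia.
by exists b, a; rewrite !mem_iota; split => //; lia.
Qed.

Lemma size_ordered_pairs W : 2 * size (ordered_pairs W) = W * W.+1.
Proof.
rewrite size_allpairs_dep (eq_map (fun b => size_iota 0 b.+1)).
elim: W => [|W IH] //.
by rewrite -[in iota 0 W.+1]addn1 iotaD map_cat sumn_cat /=; lia.
Qed.

Lemma eq_gates_bound N m (A : algo) : wf_algo N m A -> eq_distinct A ->
  2 * size (eq_inputs (gates A)) <= (m.+1 + group_cost A) * (m.+2 + group_cost A).
Proof.
move=> /eq_inputs_bounded bounded distinct.
rewrite [m.+2 + _]addSn -size_ordered_pairs leq_pmul2l //.
apply: uniq_leq_size distinct _ => -[a b] ab_in.
by rewrite mem_ordered_pairs; exact: (allP bounded _ ab_in).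
Qed.

Local Open Scope ring_scope.

Theorem mainTheorem4 (R : realType) :
  exists C : R, 0 < C /\
  forall (N m T : nat) (A : algo),
    prime N -> (0 < m)%N ->
    wf_algo N m A -> eq_distinct A -> (group_cost A <= T)%N ->
    success_prob R N m A <=
      C * (expR 1 * ((T + 2 * m + 1) ^ 2)%N%:R / (2 * m * N)%N%:R) ^+ m.
Proof.
exists 1; split => // N m T A N_prime m_gt0 wf distinct cost_le.
set q := size (eq_inputs (gates A)); set K := ((T + 2 * m + 1) ^ 2)%N.
have q_le : (2 * q <= K)%N by have := eq_gates_bound wf distinct; nia.
have half_K n : (2 * n <= K)%N -> n%:R <= K%:R / 2 :> R.
  by move=> le_nK; rewrite ler_pdivlMr // -[2]/(2%:R) -natrM ler_nat mulnC.
have N_pos : 0 < N%:R :> R by rewrite ltr0n prime_gt0.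
have m_pos : 0 < m%:R :> R by rewrite ltr0n.
rewrite mul1r; apply: le_trans (@success_prob_le R N m A N_prime) _.
rewrite ler_pdivrMr ?ltr0n ?expn_gt0 ?prime_gt0 //.
apply: le_trans (binom_sum_le_expR m_gt0 (half_K q q_le) (half_K m _)) _; first by nia.
rewrite natrX -exprMn.
suff -> : expR 1 * K%:R / (2 * m * N)%N%:R * N%:R = expR 1 * (K%:R / 2) / m%:R :> R by [].
by rewrite !natrM; field; rewrite !gt_eqF.
Qed.
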